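(* For $r\ge2$, let $H(r)$ be the graph constructed from two disjoint copies of $K_{r+2}$ by adding a matching of $r$ edges, each joining a vertex of the first copy to a vertex of the second copy. Then $\mathrm{Z}_-(H(r))=r$, $\overline{\mathrm{Z}}_-(H(r))=r+1$, and $z^-_0(H(r))=2r=\overline{\mathrm{Z}}_-(H(r))+r-1$.
   Context: All graphs are finite, simple, undirected. Skew color change rule: with $W$ the set of white (non-blue) vertices, any vertex $u$ (blue or white) may color a white vertex $w$ blue if $N(u)\cap W=\{w\}$. $S$ is a skew forcing set if starting with exactly $S$ blue and applying the rule repeatedly, all vertices become blue. $\mathrm{Z}_-(G)$ is the minimum cardinality of a skew forcing set and $\overline{\mathrm{Z}}_-(G)$ the maximum cardinality of an inclusion-minimal skew forcing set. $\mathfrak{Z}^-(G)$ has as vertices the skew forcing sets, with $S_1S_2$ an edge iff $|S_1\ominus S_2|=1$; $\mathfrak{Z}^-_k(G)$ is its subgraph induced by skew forcing sets of size at most $k$. $z^-_0(G)$ is the least $k_0$ such that $\mathfrak{Z}^-_k(G)$ is connected for all $k\ge k_0$. *)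

From mathcomp Require Import all_boot.
Set Implicit Arguments. Unset Strict Implicit. Unset Printing Implicit Defensive.

(* A finite simple graph is given by a vertex finType T and an adjacency
   relation e : rel T (symmetric, irreflexive for the graphs used here). *)
Section Skew.
Variables (T : finType) (e : rel T).

Definition nbhd (u : T) : {set T} := [set x | e u x].

Definition skew_step : rel {set T} := fun B B' =>
  [exists u : T, exists w : T,
     [&& w \notin B, nbhd u :&: ~: B == [set w] & B' == w |: B]].

Definition skew_forcing (S : {set T}) : bool := connect skew_step S [set: T].

(* Z_-(G): minimum cardinality of a skew forcing set (setT is one). *)
Definition Zminus : nat :=
  \big[minn/#|T|]_(S : {set T} | skew_forcing S) #|S|.

Definition Zbar_minus : nat :=
  \max_(S : {set T} | minset skew_forcing S) #|S|.

Definition zvert (k : nat) (S : {set T}) : bool := skew_forcing S && (#|S| <= k).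

Definition zadj (k : nat) : rel {set T} := fun S1 S2 =>
  [&& zvert k S1, zvert k S2 & #|(S1 :\: S2) :|: (S2 :\: S1)| == 1].

Definition zconnected (k : nat) : Prop :=
  forall S1 S2, zvert k S1 -> zvert k S2 -> connect (zadj k) S1 S2.

Definition is_z0_minus (k0 : nat) : Prop :=
  (forall k, k0 <= k -> zconnected k) /\
  (forall k1, (forall k, k1 <= k -> zconnected k) -> k0 <= k1).

End Skew.

(* H(r): two disjoint copies of K_{r+2} (vertices (false,i) and (true,i),
   i < r+2), plus the matching (false,i)--(true,i) for i < r. *)
Definition H_vert (r : nat) := (bool * 'I_r.+2)%type.
Definition H_adj (r : nat) : rel (H_vert r) := fun x y =>
  if x.1 == y.1 then x.2 != y.2 else (x.2 == y.2) && (x.2 < r).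
Arguments H_adj r : clear implicits.

(* If a vertex u performs the first force of a skew forcing process from S,
   forcing w, then N(u) \ {w} is contained in S.  In H(r) every such set
   N(u) \ {w} is itself skew forcing: u forces w, and N(u) contains a clique
   minus one vertex, which forces its whole clique, then the matched vertices
   of the other clique and finally its two unmatched ones.  As |N(u)| is r+1
   or r+2, every skew forcing set has at least r vertices, every minimal one
   is such an N(u) \ {w} of size at most r+1, and N(a0) \ {a1}, with a0 matched
   and a1 a vertex of the same clique, is minimal of size r+1.
   For k >= 2r any skew forcing set of size at most k is linked in the
   reconfiguration graph to a minimum one, through sets lying below common
   supersets of size at most k.  For k = 2r-1, the property "at most two white
   vertices in the first clique" is invariant along edges, since a skew
   forcing set has at most two white vertices in some clique and a set with
   this in both cliques has at least 2r vertices; it separates the two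
   minimum sets obtained from the two cliques. *)

From HB Require Import structures.
From mathcomp Require Import all_boot zify.
Set Implicit Arguments. Unset Strict Implicit. Unset Printing Implicit Defensive.

(* [minn] has no unit on [nat]; as a commutative semigroup law it still gets
   [bigD1], which is what the minimum in [Zminus] needs. *)
HB.instance Definition _ := SemiGroup.isComLaw.Build nat minn minnA minnC.

Lemma bigmin_leq (I : finType) (P : pred I) (F : I -> nat) m i :
  P i -> \big[minn/m]_(j | P j) F j <= F i.
Proof. by move=> Pi; rewrite (bigD1 i) //= geq_minl. Qed.

Section SkewForcing.
Variables (T : finType) (e : rel T).
Local Notation forcing := (skew_forcing e).

Lemma skew_stepP (B B' : {set T}) :
  reflect (exists u w, [/\ w \in nbhd e u, w \notin B,
                           nbhd e u :\ w \subset B & B' = w |: B])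
          (skew_step e B B').
Proof.
apply: (iffP existsP) => [[u /existsP [w /and3P [wB /eqP NuW /eqP ->]]] |
                          [u [w [wN wB sub ->]]]].
  have wN : w \in nbhd e u by have := set11 w; rewrite -NuW => /setIP [].
  exists u, w; split=> //; apply/subsetP => v; rewrite !inE => /andP [vw ev].
  apply: contraR vw => vB; suff : v \in [set w] by rewrite inE.
  by rewrite -NuW !inE ev vB.
exists u; apply/existsP; exists w; rewrite wB eqxx andbT /=.
apply/eqP/setP => v; move: wN; rewrite !inE; have [-> -> // | vw _] := eqVneq v w.
by case ev: (e u v); rewrite //= (subsetP sub) // !inE vw.
Qed.

Lemma skew_forcing_mono (B B' : {set T}) : B \subset B' -> forcing B -> forcing B'.
Proof.
move=> sBB' /connectP [p]; elim: p B B' sBB' => [|C p IHp] B B' sBB' /=.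
  move=> _ TB; have -> : B' = setT by apply/eqP; rewrite eqEsubset subsetT TB.
  exact: connect0.
case/andP=> /skew_stepP [u [w [wN wB sub ->]]] path_p last_p.
have [wB' | wB'] := boolP (w \in B').
  by apply: IHp path_p last_p; rewrite subUset sub1set wB'.
have stepB' : skew_step e B' (w |: B').
  by apply/skew_stepP; exists u, w; split=> //; apply: subset_trans sub sBB'.
exact: connect_trans (connect1 stepB') (IHp _ _ (setUS [set w] sBB') path_p last_p).
Qed.

Lemma skew_forcing_ind (P : pred {set T}) :
  (forall X, P X -> X != setT -> exists2 Y, skew_step e X Y & P Y) ->
  forall X, P X -> forcing X.
Proof.
move=> progress X; have [n] := ubnP #|~: X|; elim: n X => // n IHn X ltXn PX.
have [-> | XnT] := eqVneq X setT; first exact: connect0.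
have [Y stepXY PY] := progress X PX XnT.
apply: connect_trans (connect1 stepXY) (IHn _ _ PY).
case/skew_stepP: stepXY => u [w [_ wX _ ->]].
rewrite -ltnS (leq_trans _ ltXn) // ltnS; apply: proper_card; rewrite properC.
by apply/properP; split; [apply: subsetUr | exists w; rewrite ?inE ?eqxx].
Qed.

Lemma skew_forcing_first_force (S : {set T}) : forcing S -> S != setT ->
  exists u w, w \in nbhd e u /\ nbhd e u :\ w \subset S.
Proof.
case/connectP => [[|C p]] /=; first by move=> _ ->; rewrite eqxx.
by case/andP => /skew_stepP [u [w [wN _ sub _]]] _ _ _; exists u, w.
Qed.

Lemma zadj_sym k : symmetric (zadj e k).
Proof. by move=> S1 S2; rewrite /zadj andbCA setUC. Qed.

Lemma zadj_connect_sym k (S1 S2 : {set T}) :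
  connect (zadj e k) S1 S2 = connect (zadj e k) S2 S1.
Proof. exact: (sym_connect_sym (@zadj_sym k)). Qed.

Lemma zadj_connect_superset k (S S' : {set T}) :
  forcing S -> S \subset S' -> #|S'| <= k -> connect (zadj e k) S S'.
Proof.
move=> fS sSS' leS'k; have [n] := ubnP #|S' :\: S|.
elim: n S fS sSS' => // n IHn S fS sSS' ltn.
have [SS' | [v]] := set_0Vmem (S' :\: S).
  have -> : S = S' by apply/eqP; rewrite eqEsubset sSS' -setD_eq0; apply/eqP.
  exact: connect0.
rewrite inE => /andP [vS vS'].
have fvS : forcing (v |: S) by apply: skew_forcing_mono fS; apply: subsetUr.
have svS : v |: S \subset S' by rewrite subUset sub1set vS' sSS'.
apply: connect_trans (connect1 _) (IHn _ fvS svS _).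
  rewrite /zadj /zvert fS fvS (leq_trans (subset_leq_card sSS')) //=.
  rewrite (leq_trans (subset_leq_card svS)) //=.
  suff -> : (S :\: (v |: S)) :|: ((v |: S) :\: S) = [set v] by rewrite cards1.
  apply/setP => w; rewrite !inE.
  by case: (w =P v) => [-> | _]; rewrite ?(negbTE vS) //; case: (w \in S).
rewrite -ltnS (leq_trans _ ltn) // ltnS; apply: proper_card; apply/properP; split.
  by apply: setDS; apply: subsetUr.
by exists v; rewrite !inE ?eqxx ?vS' // (negbTE vS).
Qed.

Lemma zadj_connect_via k (U S1 S2 : {set T}) : forcing S1 -> forcing S2 ->
  S1 \subset U -> S2 \subset U -> #|U| <= k -> connect (zadj e k) S1 S2.
Proof.
move=> f1 f2 s1 s2 leUk.
apply: connect_trans (zadj_connect_superset f1 s1 leUk) _.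
by rewrite zadj_connect_sym; apply: zadj_connect_superset.
Qed.

Lemma zadj_setD k (S1 S2 : {set T}) : zadj e k S1 S2 ->
  exists v, forall A : {set T}, v \notin A -> A :\: S1 = A :\: S2.
Proof.
case/and3P => _ _ /cards1P [v sym_v]; exists v => A vA; apply/setP => w.
rewrite !inE; have [-> | wv] := eqVneq w v; first by rewrite (negbTE vA) !andbF.
have : w \notin (S1 :\: S2) :|: (S2 :\: S1) by rewrite sym_v inE.
by rewrite !inE; case: (w \in S1); case: (w \in S2).
Qed.

End SkewForcing.

Section HGraph.
Variable r : nat.
Local Notation V := (H_vert r).
Local Notation forcing := (skew_forcing (H_adj r)).
Local Notation N := (nbhd (H_adj r)).

Definition side (s : bool) : {set V} := [set v : V | v.1 == s].
Definition mate (u : V) : V := (~~ u.1, u.2).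

Lemma nbhdE (u : V) : N u = side u.1 :\ u :|: (if u.2 < r then [set mate u] else set0).
Proof.
case: u => [c j]; apply/setP => [[b i]]; rewrite !inE /H_adj /mate /=.
by case: b; case: c; case: (j < r);
  rewrite /= ?inE ?xpair_eqE /= ?andbT ?andbF ?orbF // eq_sym.
Qed.

Lemma nbhd_unmatched (u : V) : r <= u.2 -> N u = side u.1 :\ u.
Proof. by move=> ru; rewrite nbhdE ltnNge ru setU0. Qed.

Lemma sideD1_sub_nbhd (u : V) : side u.1 :\ u \subset N u.
Proof. by rewrite nbhdE subsetUl. Qed.

Lemma card_side s : #|side s| = r.+2.
Proof.
have -> : side s = [set (s, i) | i : 'I_r.+2].
  apply/setP => [[b i]]; rewrite inE /=.
  by apply/eqP/imsetP => [<- | [j _ [-> _]]] //; exists i.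
by rewrite card_imset ?card_ord // => i j [].
Qed.

Lemma card_sideD1 (u : V) : #|side u.1 :\ u| = r.+1.
Proof. by have := cardsD1 u (side u.1); rewrite card_side inE eqxx => -[]. Qed.

Lemma card_nbhdD1 (u w : V) : w \in N u -> #|N u :\ w| = r + (u.2 < r).
Proof.
move=> wN; suff : #|N u| = (r + (u.2 < r)).+1 by rewrite (cardsD1 w) wN => -[].
rewrite nbhdE; case: ifP => _; last by rewrite setU0 card_sideD1 addn0.
rewrite setUC cardsU1 card_sideD1 !inE /mate /= addnC.
by case: (u.1); rewrite /= ?andbF.
Qed.

Definition ord_r : 'I_r.+2 := Ordinal (leqnSn r.+1).
Definition twin (i : 'I_r.+2) : 'I_r.+2 := if i == ord_r then ord_max else ord_r.

Lemma twin_neq i : twin i != i.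
Proof.
rewrite /twin; case: ifP => [/eqP -> | /negbT]; last by rewrite eq_sym.
by rewrite -val_eqE /=; lia.
Qed.

Lemma twin_unmatched i : r <= twin i.
Proof. by rewrite /twin; case: ifP. Qed.

Lemma unmatched_twin (i j : 'I_r.+2) : r <= i -> r <= j -> j != i -> j = twin i.
Proof.
move=> ri rj; rewrite /twin -!val_eqE; apply: contraNeq; rewrite -val_eqE.
have := ltn_ord i; have := ltn_ord j; case: ifP => /eqP /=; lia.
Qed.

Lemma side_forcing s : forcing (side s).
Proof.
apply: (skew_forcing_ind (P := fun X => side s \subset X)) => // X sX XnT.
have /subsetPn [w _ wX] : ~~ ([set: V] \subset X) by rewrite subTset.
have notside v : v \notin X -> v.1 = ~~ s.
  move=> vX; have : v \notin side s by apply: contra vX; apply: (subsetP sX).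
  by rewrite inE; case: (v.1); case: (s).
case: (pickP [pred v : V | (v \notin X) && (v.2 < r)]) => [v /andP [vX vr] | unmatched].
  exists (v |: X); last exact: subset_trans sX (subsetUr _ _).
  apply/skew_stepP; exists (s, v.2), v; split => //.
    by rewrite nbhdE /= vr !inE /mate /= -(notside _ vX) -surjective_pairing eqxx orbT.
  apply/subsetP => x; rewrite nbhdE /= vr !inE /mate /= -(notside _ vX) -surjective_pairing.
  case/andP => /negbTE xv; rewrite xv orbF => /andP [_ xs].
  by apply: (subsetP sX); rewrite inE.
(* Now all white vertices are unmatched, hence among the two vertices of index
   at least r in the clique of [w]; the other one of these forces [w]. *)
have unm v : v \notin X -> r <= v.2.
  by move=> vX; have := unmatched v; rewrite /= vX ltnNge => /negbFE.
exists (w |: X); last exact: subset_trans sX (subsetUr _ _).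
apply/skew_stepP; exists (~~ s, twin w.2), w; split => //;
  rewrite nbhd_unmatched ?twin_unmatched //=; case: w wX => c j wX;
  have /= -> := notside _ wX.
  by rewrite !inE !xpair_eqE eqxx andbT /= eq_sym twin_neq.
apply/subsetP => [[b i]]; rewrite !inE !xpair_eqE /= => /and3P [ij ti /eqP bs].
subst b; rewrite eqxx /= in ij ti.
by apply: contraR ti => iX; apply/eqP/unmatched_twin; rewrite ?(unm _ iX) ?(unm _ wX).
Qed.

Lemma sideD1_forcing (u : V) : forcing (side u.1 :\ u).
Proof.
have step : skew_step (H_adj r) (side u.1 :\ u) (u |: (side u.1 :\ u)).
  apply/skew_stepP; exists (u.1, twin u.2), u; rewrite nbhd_unmatched ?twin_unmatched //=.
  split => //; last by apply/subsetP => v; rewrite !inE => /and3P [-> _ ->].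
    by case: u => c j; rewrite !inE !xpair_eqE !eqxx /= andbT eq_sym twin_neq.
  by rewrite !inE eqxx.
rewrite setD1K ?inE ?eqxx // in step.
exact: connect_trans (connect1 step) (side_forcing _).
Qed.

Lemma nbhdD1_forcing (u w : V) : w \in N u -> forcing (N u :\ w).
Proof.
move=> wN; have step : skew_step (H_adj r) (N u :\ w) (w |: (N u :\ w)).
  by apply/skew_stepP; exists u, w; split; rewrite ?in_setD1 ?eqxx.
rewrite setD1K // in step; apply: connect_trans (connect1 step) _.
exact: skew_forcing_mono (sideD1_sub_nbhd u) (sideD1_forcing u).
Qed.

Lemma forcing_first_force S :
  forcing S -> exists (u w : V), w \in N u /\ N u :\ w \subset S.
Proof.
move=> fS; have [-> | SnT] := eqVneq S setT; last exact: skew_forcing_first_force.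
exists (false, ord_r), (false, ord_max); split; last exact: subsetT.
apply: (subsetP (sideD1_sub_nbhd _)); rewrite !inE xpair_eqE /= -val_eqE /=; lia.
Qed.

Lemma forcing_card S : forcing S -> r <= #|S|.
Proof.
case/forcing_first_force => u [w [wN sub]]; apply: leq_trans (subset_leq_card sub).
by rewrite card_nbhdD1 // leq_addr.
Qed.

Lemma forcing_sideD S : forcing S -> exists s, #|side s :\: S| <= 2.
Proof.
case/forcing_first_force => u [w [_ sub]]; exists u.1.
suff /subset_leq_card : side u.1 :\: S \subset [set u; w].
  by move/leq_trans; apply; rewrite cards2; case: (u != w).
apply/subsetP => v; rewrite inE => /andP [vS vs]; rewrite !inE.
apply: contraR vS; rewrite negb_or => /andP [vu vw]; apply: (subsetP sub).
by rewrite in_setD1 vw (subsetP (sideD1_sub_nbhd u)) // in_setD1 vu.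
Qed.

Lemma forcing_card_le S : forcing S -> #|S| <= r ->
  exists (u w : V), [/\ w \in N u, r <= u.2 & S = N u :\ w].
Proof.
move=> fS leSr; have [u [w [wN sub]]] := forcing_first_force fS.
have := subset_leq_card sub; rewrite card_nbhdD1 // => leNS.
exists u, w; split => //.
  by rewrite leqNgt; apply/negP => ur; move: leNS; rewrite ur; lia.
by apply/esym/eqP; rewrite eqEcard sub card_nbhdD1 //; lia.
Qed.

Definition zmin_set s : {set V} := N (s, ord_r) :\ (s, ord_max).

Lemma ord_max_in_nbhd_r s : ((s, ord_max) : V) \in N (s, ord_r).
Proof.
by apply: (subsetP (sideD1_sub_nbhd _)); rewrite !inE xpair_eqE /= -val_eqE /=; lia.
Qed.

Lemma zmin_set_forcing s : forcing (zmin_set s).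
Proof. exact: nbhdD1_forcing (ord_max_in_nbhd_r s). Qed.

Lemma card_zmin_set s : #|zmin_set s| = r.
Proof. by rewrite card_nbhdD1 ?ord_max_in_nbhd_r //= ltnn addn0. Qed.

Lemma zmin_set_sub_side s : zmin_set s \subset side s.
Proof.
by rewrite /zmin_set nbhd_unmatched //=; apply/subsetP => v; rewrite !inE => /and3P [].
Qed.

Lemma Zminus_H : Zminus (H_adj r) = r.
Proof.
apply/eqP; rewrite eqn_leq; apply/andP; split.
  have := bigmin_leq (fun S : {set V} => #|S|) #|{: V}| (zmin_set_forcing false).
  by rewrite card_zmin_set.
apply: (big_ind (fun m => r <= m)) => [| m n | S]; last exact: forcing_card.
  by apply: leq_trans (max_card (side false)); rewrite card_side; lia.
by rewrite leq_min => -> ->.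
Qed.

Hypothesis r_gt1 : 1 < r.

Definition a0 : V := (false, ord0).
Definition a1 : V := (false, Ordinal (isT : 1 < r.+2)).
Definition zbar_set : {set V} := N a0 :\ a1.

Lemma a1_in_nbhd_a0 : a1 \in N a0.
Proof. by apply: (subsetP (sideD1_sub_nbhd _)); rewrite !inE. Qed.

Lemma card_zbar_set : #|zbar_set| = r.+1.
Proof. by rewrite card_nbhdD1 ?a1_in_nbhd_a0 //= ltnW // addn1. Qed.

Lemma zbar_set_minset : minset forcing zbar_set.
Proof.
apply/minsetP; split=> [|B fB sBE]; first exact: nbhdD1_forcing a1_in_nbhd_a0.
apply/eqP; rewrite eqEcard sBE card_zbar_set leqNgt /=; apply/negP => ltBr.
have [u [w [wN ru defB]]] := forcing_card_le fB ltBr.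
have cardB : #|B| = r by rewrite defB card_nbhdD1 // ltnNge ru addn0.
have sBside : B \subset side u.1.
  by rewrite defB nbhd_unmatched //; apply/subsetP => v; rewrite !inE => /and3P [].
case su: u.1 in sBside.
  suff /subset_leq_card : B \subset [set mate a0] by rewrite cards1 cardB; lia.
  apply/subsetP => v vB; have := subsetP sBE v vB; have := subsetP sBside v vB.
  rewrite /zbar_set nbhdE /= (ltnW r_gt1) !inE.
  by case: v {vB} => [[] i]; rewrite /= ?andbF.
have forced (v : V) : v.1 = false -> v.2 < r -> v \notin B -> v = w.
  move=> v1 vr vB; apply/eqP; apply: contraR vB => vw.
  rewrite defB in_setD1 vw nbhd_unmatched // !inE v1 su eqxx andbT.
  by apply: contraTneq ru => <-; rewrite -ltnNge.
have a0w : a0 = w.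
  apply: forced => //=; first lia.
  by apply: contra (subsetP sBE a0) _; rewrite !inE /H_adj eqxx andbF.
have a1w : a1 = w.
  by apply: forced => //; apply: contra (subsetP sBE a1) _; rewrite !inE eqxx.
by move: a0w; rewrite -a1w.
Qed.

Lemma minset_card S : minset forcing S -> #|S| <= r.+1.
Proof.
case/minsetP => fS minS; have [u [w [wN sub]]] := forcing_first_force fS.
rewrite -(minS _ (nbhdD1_forcing wN) sub) card_nbhdD1 //.
by case: (_ < r); rewrite ?addn0 ?addn1.
Qed.

Lemma Zbar_minus_H : Zbar_minus (H_adj r) = r.+1.
Proof.
apply/eqP; rewrite eqn_leq; apply/andP; split; first exact/bigmax_leqP/minset_card.
by rewrite -{1}card_zbar_set; apply: leq_bigmax_cond zbar_set_minset.
Qed.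

Lemma zadj_connect_zmin_set k S : 2 * r <= k -> zvert (H_adj r) k S ->
  connect (zadj (H_adj r) k) S (zmin_set false).
Proof.
move=> rk /andP [fS Sk]; have [u [w [wN sub]]] := forcing_first_force fS.
have fB := nbhdD1_forcing wN; have fC := sideD1_forcing u.
have cardN : #|N u| <= k by rewrite (cardsD1 w) wN card_nbhdD1 //; case: (_ < r); lia.
have cardM : #|zmin_set false :|: zmin_set true| <= k.
  by apply: leq_trans (leq_card_setU _ _) _; rewrite !card_zmin_set; lia.
apply: connect_trans (zadj_connect_via fS fB (subxx _) sub Sk) _.
apply: connect_trans (zadj_connect_via fB fC (subsetDl _ _) (sideD1_sub_nbhd u) cardN) _.
have cardC : #|side u.1| <= k by rewrite card_side; lia.
apply: connect_trans
  (zadj_connect_via fC (zmin_set_forcing u.1) (subsetDl _ _) (zmin_set_sub_side _) cardC) _.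
apply: (zadj_connect_via (zmin_set_forcing _) (zmin_set_forcing _) _ (subsetUl _ _) cardM).
by case: (u.1); [apply: subsetUr | apply: subsetUl].
Qed.

Lemma zconnected_H k : 2 * r <= k -> zconnected (H_adj r) k.
Proof.
move=> rk S1 S2 S1k S2k; apply: connect_trans (zadj_connect_zmin_set rk S1k) _.
by rewrite zadj_connect_sym; apply: zadj_connect_zmin_set.
Qed.

Lemma card_sidesD S :
  #|side false :\: S| <= 2 -> #|side true :\: S| <= 2 -> 2 * r <= #|S|.
Proof.
move=> small_f small_t.
have : ~: S \subset (side false :\: S) :|: (side true :\: S).
  by apply/subsetP => v; rewrite !inE => ->; case: (v.1).
move/subset_leq_card/leq_trans/(_ (leq_card_setU _ _)) => cardC.
have := cardsC S; rewrite card_prod card_bool card_ord; lia.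
Qed.

Lemma zadj_sideD_small S1 S2 : zadj (H_adj r) (2 * r - 1) S1 S2 ->
  #|side false :\: S1| <= 2 -> #|side false :\: S2| <= 2.
Proof.
move=> adj12; have [v eqD] := zadj_setD adj12.
case/and3P: adj12 => /andP [_ S1k] /andP [fS2 _] _ small1.
have [vt | vf] := boolP v.1; first by rewrite -eqD // inE vt.
rewrite leqNgt; apply/negP => big2; have [s small2] := forcing_sideD fS2.
case: s in small2 *.
  rewrite -eqD ?inE ?eqb_id // in small2.
  by have := leq_trans (card_sidesD small1 small2) S1k; lia.
by rewrite leqNgt big2 in small2.
Qed.

Lemma not_zconnected_H : ~ zconnected (H_adj r) (2 * r - 1).
Proof.
have zmin_vert s : zvert (H_adj r) (2 * r - 1) (zmin_set s).
  by rewrite /zvert zmin_set_forcing card_zmin_set; lia.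
have cl : closed (zadj (H_adj r) (2 * r - 1)) [pred S | #|side false :\: S| <= 2].
  by move=> S1 S2 adj12; apply/idP/idP; apply: zadj_sideD_small; rewrite // zadj_sym.
move=> /(_ _ _ (zmin_vert false) (zmin_vert true)) /(closed_connect cl); rewrite !inE.
have -> : side false :\: zmin_set true = side false.
  apply/setDidPl/(disjointWr (zmin_set_sub_side true)); rewrite disjoints_subset.
  by apply/subsetP => v; rewrite !inE; case: (v.1).
by rewrite cardsD (setIidPr (zmin_set_sub_side false)) card_side card_zmin_set; lia.
Qed.

End HGraph.

Theorem proposition5p8 (r : nat) (hr : 2 <= r) :
  [/\ Zminus (H_adj r) = r,
      Zbar_minus (H_adj r) = r.+1,
      is_z0_minus (H_adj r) (2 * r)
    & 2 * r = Zbar_minus (H_adj r) + r - 1].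
Proof.
split; [exact: Zminus_H | exact: Zbar_minus_H | split | by rewrite Zbar_minus_H; lia].
  by move=> k; apply: zconnected_H.
move=> k0 conn; rewrite leqNgt; apply/negP => lt_k0.
by apply: (not_zconnected_H hr); apply: conn; lia.
Qed.
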